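(* Let $n\geq 2$ be even, $m>1$, and let $G$ be a non-regular bipartite graph of order $m$ with a bipartition $\{A,B\}$ such that all vertices of $A$ have the same degree and all vertices of $B$ have the same degree. Then $\chi_{ld}(G[\overline{K_{n}}])=2$.
   Context: All graphs are finite, simple and undirected, without isolated vertices. For a graph $G=(V,E)$ of order $N$ without isolated vertices, a bijection $f\colon V\to\{1,2,\dots,N\}$ is a local distance antimagic labeling if $w(u)\neq w(v)$ for every edge $uv$, where $w(u)=\sum_{x\in N(u)}f(x)$ and $N(u)$ is the open neighborhood of $u$. $\chi_{ld}(G)$ is the minimum number of distinct weights over all local distance antimagic labelings of $G$. $\overline{K_n}$ is the edgeless graph on $n$ vertices. The lexicographic product $G[H]$ has vertex set $V(G)\times V(H)$, with $(g,h)$ adjacent to $(g',h')$ iff $gg'\in E(G)$, or $g=g'$ and $hh'\in E(H)$. *)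

From mathcomp Require Import all_boot.
Set Implicit Arguments. Unset Strict Implicit. Unset Printing Implicit Defensive.

Definition simple_graph (T : finType) (e : rel T) : Prop :=
  symmetric e /\ irreflexive e.

Definition no_isolated (T : finType) (e : rel T) : Prop :=
  forall x, exists y, e x y.

Definition deg (T : finType) (e : rel T) (x : T) : nat := #|[set y | e x y]|.

Definition regular (T : finType) (e : rel T) : Prop :=
  forall x y, deg e x = deg e y.

Definition bipartition (T : finType) (e : rel T) (A B : {set T}) : Prop :=
  A :&: B = set0 /\ A :|: B = [set: T] /\
  forall x y, e x y -> (x \in A) && (y \in B) || (x \in B) && (y \in A).

Definition edgeless (n : nat) : rel 'I_n := fun _ _ => false.

Definition lexprod (T U : finType) (e : rel T) (h : rel U) : rel (T * U) :=
  fun p q => e p.1 q.1 || (p.1 == q.1) && h p.2 q.2.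

(* A labeling f : V -> 'I_N encodes the labels f x + 1 in {1,...,N}, N = |V|;
   it is a bijection iff it is injective. *)
Definition label (T : finType) (f : {ffun T -> 'I_#|T|}) (x : T) : nat :=
  (nat_of_ord (f x)).+1.

Definition weight (T : finType) (e : rel T) (f : {ffun T -> 'I_#|T|}) (u : T)
  : nat := \sum_(x | e u x) label f x.

Definition ld_antimagic (T : finType) (e : rel T) (f : {ffun T -> 'I_#|T|})
  : bool :=
  injectiveb f && [forall u, forall v, e u v ==> (weight e f u != weight e f v)].

Definition nweights (T : finType) (e : rel T) (f : {ffun T -> 'I_#|T|}) : nat :=
  size (undup [seq weight e f x | x <- enum T]).

(* chi_ld(G): minimum of nweights over local distance antimagic labelings
   (the default #|T|.+1 is never attained by a labeling, so it only arises
   when there are no such labelings). *)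
Definition chi_ld (T : finType) (e : rel T) : nat :=
  \big[minn/#|T|.+1]_(f : {ffun T -> 'I_#|T|} | ld_antimagic e f) nweights e f.

(** Split the [n = 2k] copies of each vertex [g] of [G] into [k] pairs and give
    the two members of each pair complementary labels [x] and [N + 1 - x], where
    [N = m n]. Every copy-block of [G[K_n-bar]] then has the same label sum [c],
    so the weight of [(g, i)] is [deg g * c]. Since [G] is bipartite with
    constant degree on each side but not regular, the two sides have different
    degrees: the labeling is local distance antimagic with exactly two weights.
    Two weights are also necessary, since the ends of an edge have different
    weights. *)

From mathcomp Require Import all_boot all_order zify.
Import Order.TTheory.

Set Implicit Arguments.
Unset Strict Implicit.
Unset Printing Implicit Defensive.

Section Labelings.

Variables (T : finType) (e : rel T).

Lemma chi_ld_le_nweights (f : {ffun T -> 'I_#|T|}) :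
  ld_antimagic e f -> chi_ld e <= nweights e f.
Proof.
by move=> f_ld; rewrite /chi_ld -minEnat; apply: (@bigmin_le_cond _ nat).
Qed.

Lemma nweights_le_size (f : {ffun T -> 'I_#|T|}) (s : seq nat) :
  (forall x, weight e f x \in s) -> nweights e f <= size s.
Proof.
move=> ws; apply: uniq_leq_size (undup_uniq _) _ => w.
by rewrite mem_undup => /mapP[x _ ->].
Qed.

Lemma nweights_edge_ge2 (f : {ffun T -> 'I_#|T|}) x y :
  e x y -> ld_antimagic e f -> 1 < nweights e f.
Proof.
move=> exy /andP[_ /forallP/(_ x)/forallP/(_ y)/implyP/(_ exy) wxy].
rewrite /nweights -[2]/(size [:: weight e f x; weight e f y]).
apply: uniq_leq_size; first by rewrite /= inE wxy.
by move=> w; rewrite !inE mem_undup => /orP[]/eqP->; rewrite map_f ?mem_enum.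
Qed.

Lemma chi_ld_edge_ge2 x y : e x y -> 1 < chi_ld e.
Proof.
move=> exy; rewrite /chi_ld -minEnat; apply: (@le_bigmin _ nat) => [|f].
  by rewrite leEnat ltnS; apply/card_gt0P; exists x.
exact: nweights_edge_ge2 exy.
Qed.

Lemma labeling_of_nat (v : T -> nat) :
  injective v -> (forall x, v x < #|T|) ->
  exists2 f : {ffun T -> 'I_#|T|}, injective f & forall x, label f x = (v x).+1.
Proof.
move=> v_inj v_lt; exists [ffun x => Ordinal (v_lt x)] => [x y|x].
  by rewrite !ffunE => /(congr1 val) /v_inj.
by rewrite /label ffunE.
Qed.

End Labelings.

Section LexicographicEdgeless.

Variables (T : finType) (e : rel T) (n : nat).

Local Notation en := (lexprod e (@edgeless n)).

Lemma lexprod_edgeless p q : en p q = e p.1 q.1.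
Proof. by rewrite /lexprod /edgeless andbF orbF. Qed.

Lemma weight_lexprod_edgeless (f : {ffun T * 'I_n -> 'I_#|{: T * 'I_n}|}) c :
  (forall g, \sum_(j < n) label f (g, j) = c) ->
  forall p, weight en f p = deg e p.1 * c.
Proof.
move=> block_sum [g i].
transitivity (\sum_(a | e g a) \sum_(j < n) label f (a, j)).
  rewrite pair_big_dep; apply: eq_big => [[a j]|[a j] _] //=.
  by rewrite lexprod_edgeless andbT.
rewrite /deg (eq_bigr _ (fun a _ => block_sum a)) sum_nat_const.
by congr (_ * _); apply: eq_card => a; rewrite inE.
Qed.

Lemma ld_antimagic_lexprod_edgeless
    (f : {ffun T * 'I_n -> 'I_#|{: T * 'I_n}|}) c :
  injective f -> 0 < c -> (forall g, \sum_(j < n) label f (g, j) = c) ->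
  (forall x y, e x y -> deg e x != deg e y) -> ld_antimagic en f.
Proof.
move=> f_inj c_gt0 block_sum deg_neq; apply/andP; split; first exact/injectiveP.
apply/forallP => p; apply/forallP => q; apply/implyP.
by rewrite lexprod_edgeless !(weight_lexprod_edgeless block_sum) eqn_pmul2r //;
  apply: deg_neq.
Qed.

End LexicographicEdgeless.

Section BalancedLabeling.

Variables (U : finType) (k : nat).

Local Notation M := #|{: U * 'I_k}|.

Let rank (q : U * 'I_k) : nat := enum_rank q.

Let rank_lt q : rank q < M.
Proof. exact: ltn_ord. Qed.

Let rank_inj : injective rank.
Proof. by move=> q q' /val_inj/enum_rank_inj. Qed.

Definition balanced_rank (p : U * 'I_(k + k)) : nat :=
  match split p.2 with
  | inl j => rank (p.1, j)
  | inr j => (M + M).-1 - rank (p.1, j)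
  end.

Lemma card_prod_double : #|{: U * 'I_(k + k)}| = M + M.
Proof. by rewrite !card_prod !card_ord mulnDr. Qed.

Lemma balanced_rank_lt p : balanced_rank p < #|{: U * 'I_(k + k)}|.
Proof.
rewrite card_prod_double /balanced_rank.
by case: split => j; have := rank_lt (p.1, j); lia.
Qed.

Lemma balanced_rank_inj : injective balanced_rank.
Proof.
move=> [g i] [g' i']; rewrite /balanced_rank /=.
case: (split i) (splitK i) => j <-; case: (split i') (splitK i') => j' <-;
  have := rank_lt (g, j); have := rank_lt (g', j').
- by move=> _ _ /rank_inj[-> ->].
- lia.
- lia.
- by move=> *; have /rank_inj[-> ->] : rank (g, j) = rank (g', j') by lia.
Qed.

Lemma balanced_rank_block_sum g :
  \sum_(i < k + k) (balanced_rank (g, i)).+1 = k * (M + M).+1.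
Proof.
rewrite big_split_ord /= -big_split /= (eq_bigr (fun=> (M + M).+1)).
  by rewrite sum_nat_const card_ord.
move=> j _; rewrite /balanced_rank /=.
have /= -> := unsplitK (inl _ j : 'I_k + 'I_k).
have /= -> := unsplitK (inr _ j : 'I_k + 'I_k).
by have := rank_lt (g, j); lia.
Qed.

Lemma balanced_labeling :
  exists2 f : {ffun U * 'I_(k + k) -> 'I_#|{: U * 'I_(k + k)}|}, injective f &
    forall g, \sum_(i < k + k) label f (g, i) = k * (M + M).+1.
Proof.
have [f f_inj f_rank] := labeling_of_nat balanced_rank_inj balanced_rank_lt.
exists f => // g; rewrite -(balanced_rank_block_sum g).
by apply: eq_bigr => i _; rewrite f_rank.
Qed.

End BalancedLabeling.

Section BiregularBipartite.

Variables (T : finType) (e : rel T) (A B : {set T}).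
Hypothesis AB : bipartition e A B.
Hypothesis degA : forall x y, x \in A -> y \in A -> deg e x = deg e y.
Hypothesis degB : forall x y, x \in B -> y \in B -> deg e x = deg e y.

Lemma deg_edge_ends x y z : e x y -> deg e z \in [:: deg e x; deg e y].
Proof.
case: AB => [_ [ABT bip]] exy.
have : z \in A :|: B by rewrite ABT inE.
rewrite !inE; case/orP: (bip x y exy) => /andP[xX yY] /orP[zA|zB].
- by rewrite (degA zA xX) eqxx.
- by rewrite (degB zB yY) eqxx orbT.
- by rewrite (degA zA yY) eqxx orbT.
- by rewrite (degB zB xX) eqxx.
Qed.

Lemma deg_edge_neq x y : ~ regular e -> e x y -> deg e x != deg e y.
Proof.
move=> nreg exy; apply/eqP => dxy; apply: nreg => z z'.
suff deg_z w : deg e w = deg e x by rewrite !deg_z.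
by have := deg_edge_ends w exy; rewrite !inE -dxy orbb => /eqP.
Qed.

End BiregularBipartite.

Theorem mainTheorem17 (T : finType) (e : rel T) (n : nat) (A B : {set T}) :
  simple_graph e -> no_isolated e ->
  2 <= n -> ~~ odd n ->
  1 < #|T| ->
  ~ regular e ->
  bipartition e A B ->
  (forall x y, x \in A -> y \in A -> deg e x = deg e y) ->
  (forall x y, x \in B -> y \in B -> deg e x = deg e y) ->
  chi_ld (lexprod e (@edgeless n)) = 2.
Proof.
move=> _ noiso n_ge2 n_even T_gt1 nreg AB degA degB.
have [k n_kk] : exists k, n = k + k.
  by exists n./2; rewrite addnn -[LHS]odd_double_half (negbTE n_even).
subst n.
have k_gt0 : 0 < k by lia.
have [x0 _] : exists x0 : T, x0 \in T by apply/card_gt0P; exact: ltnW.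
have [y0 e_x0y0] := noiso x0.
have [f f_inj block_sum] := balanced_labeling T k.
set c := k * _.+1 in block_sum; have c_gt0 : 0 < c by rewrite muln_gt0 k_gt0.
have f_ld : ld_antimagic (lexprod e (@edgeless (k + k))) f.
  apply: ld_antimagic_lexprod_edgeless f_inj c_gt0 block_sum _ => x y.
  exact: (deg_edge_neq AB degA degB nreg).
apply/anti_leq/andP; split.
  apply: leq_trans (chi_ld_le_nweights f_ld) _.
  apply: (nweights_le_size (s := [:: deg e x0 * c; deg e y0 * c])) => p.
  have := deg_edge_ends AB degA degB p.1 e_x0y0.
  rewrite (weight_lexprod_edgeless e block_sum) !inE.
  by case/orP=> /eqP->; rewrite eqxx ?orbT.
have o : 'I_(k + k) := Ordinal (ltn_addr k k_gt0).
by apply: (@chi_ld_edge_ge2 _ _ (x0, o) (y0, o)); rewrite lexprod_edgeless.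
Qed.
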